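(* Let $k\ge 2$. Let $G$ be a finite simple graph admitting a closed neighborhood balanced $k$-coloring $c$ with $|c^{-1}(1)|=\dots=|c^{-1}(k)|$, and let $H$ be a finite simple graph admitting a closed neighborhood balanced $k$-coloring $c'$ with $|c'^{-1}(1)|=\dots=|c'^{-1}(k)|$. Then the join $G\vee H$ admits a closed neighborhood balanced $k$-coloring.
   Context: For a vertex $v$, $N[v]=\{v\}\cup\{u : uv\in E\}$. A closed neighborhood balanced $k$-coloring of a graph is a map $c: V\to\{1,\dots,k\}$ such that for every vertex $v$ the numbers $|\{u\in N[v] : c(u)=i\}|$, $i=1,\dots,k$, are all equal. The join $G\vee H$ of vertex-disjoint graphs has vertex set $V(G)\cup V(H)$ and edge set $E(G)\cup E(H)\cup\{gh: g\in V(G), h\in V(H)\}$. *)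

From mathcomp Require Import all_boot.
Set Implicit Arguments. Unset Strict Implicit. Unset Printing Implicit Defensive.

Definition simple_graph (T : finType) (e : rel T) : Prop :=
  symmetric e /\ irreflexive e.

Definition cnbhd (T : finType) (e : rel T) (v : T) : {set T} :=
  [set u | (u == v) || e v u].

(* closed neighborhood balanced k-coloring, colors 'I_k standing for 1..k *)
Definition cnb_coloring (T : finType) (e : rel T) (k : nat) (c : T -> 'I_k) : Prop :=
  forall (v : T) (i j : 'I_k),
    #|[set u in cnbhd e v | c u == i]| = #|[set u in cnbhd e v | c u == j]|.

Definition equitable_classes (T : finType) (k : nat) (c : T -> 'I_k) : Prop :=
  forall i j : 'I_k, #|[set u | c u == i]| = #|[set u | c u == j]|.

Definition join_rel (T1 T2 : finType) (e1 : rel T1) (e2 : rel T2) : rel (T1 + T2) :=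
  fun x y => match x, y with
             | inl a, inl b => e1 a b
             | inr a, inr b => e2 a b
             | _, _ => true
             end.

From mathcomp Require Import all_boot.
Set Implicit Arguments. Unset Strict Implicit. Unset Printing Implicit Defensive.

(* Colour G by c and H by c'.  The closed neighbourhood of a vertex of G in
   the join is its closed neighbourhood in G, balanced by c, together with all
   of H, balanced because the classes of c' have equal sizes; symmetrically
   for vertices of H. *)

Lemma card_sum_set (T1 T2 : finType) (A : {set T1 + T2}) :
  #|A| = #|[set x | inl x \in A]| + #|[set y | inr y \in A]|.
Proof.
rewrite -!sum1_card big_sumType /=.
by congr (_ + _); apply: eq_bigl => x; rewrite inE.
Qed.

Section JoinColoring.

Variables (T1 T2 : finType) (e1 : rel T1) (e2 : rel T2) (k : nat).
Variables (c1 : T1 -> 'I_k) (c2 : T2 -> 'I_k).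

Definition join_coloring (x : T1 + T2) : 'I_k :=
  match x with inl a => c1 a | inr b => c2 b end.

Lemma card_cnbhd_join_inl (a : T1) (i : 'I_k) :
  #|[set u in cnbhd (join_rel e1 e2) (inl a) | join_coloring u == i]|
  = #|[set u in cnbhd e1 a | c1 u == i]| + #|[set u | c2 u == i]|.
Proof.
by rewrite card_sum_set; congr (_ + _); apply: eq_card => x; rewrite !inE.
Qed.

Lemma card_cnbhd_join_inr (b : T2) (i : 'I_k) :
  #|[set u in cnbhd (join_rel e1 e2) (inr b) | join_coloring u == i]|
  = #|[set u | c1 u == i]| + #|[set u in cnbhd e2 b | c2 u == i]|.
Proof.
by rewrite card_sum_set; congr (_ + _); apply: eq_card => x; rewrite !inE.
Qed.

Lemma cnb_coloring_join :
  cnb_coloring e1 c1 -> equitable_classes c1 ->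
  cnb_coloring e2 c2 -> equitable_classes c2 ->
  cnb_coloring (join_rel e1 e2) join_coloring.
Proof.
move=> cnb1 eq1 cnb2 eq2 [a|b] i j.
- by rewrite !card_cnbhd_join_inl (cnb1 a i j) (eq2 i j).
- by rewrite !card_cnbhd_join_inr (cnb2 b i j) (eq1 i j).
Qed.

End JoinColoring.

Theorem theorem2p22 (k : nat) (T1 T2 : finType) (e1 : rel T1) (e2 : rel T2) :
  2 <= k ->
  simple_graph e1 -> simple_graph e2 ->
  (exists c : T1 -> 'I_k, cnb_coloring e1 c /\ equitable_classes c) ->
  (exists c' : T2 -> 'I_k, cnb_coloring e2 c' /\ equitable_classes c') ->
  exists d : T1 + T2 -> 'I_k, cnb_coloring (join_rel e1 e2) d.
Proof.
move=> _ _ _ [c [cnb_c eq_c]] [c' [cnb_c' eq_c']].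
by exists (join_coloring c c'); exact: cnb_coloring_join.
Qed.
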